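(* Let $R$ be a local ring with maximal ideal $\mathcal{M}$ such that $\mathcal{M}^2=(0)$ and, as a left $R$-module, $\mathcal{M}=Ry_1\oplus\cdots\oplus Ry_t$ with $t\ge 2$, where each $Ry_i$ is a minimal left ideal of $R$. If there exist nonzero elements $x_1,x_2\in\mathcal{M}$ with $x_1R\cap x_2R=(0)$, then the left $R$-module $(R\oplus R)/R(x_1,x_2)$ is not a direct sum of cyclic modules.
   Context: All rings have identity and modules are unital. A ring $R$ is local if it has a unique maximal left ideal $\mathcal{M}$. Here $R(x_1,x_2)=\{(rx_1,rx_2): r\in R\}$ is the cyclic left submodule of $R\oplus R$ generated by $(x_1,x_2)$. *)

From mathcomp Require Import all_boot all_algebra.
Set Implicit Arguments. Unset Strict Implicit. Unset Printing Implicit Defensive.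
Import GRing.Theory.
Local Open Scope ring_scope.

Section Defs.
Variable R : nzRingType.

Definition left_ideal (I : R -> Prop) : Prop :=
  [/\ I 0, (forall a b, I a -> I b -> I (a + b)) & (forall r a, I a -> I (r * a))].

Definition maximal_left_ideal (M : R -> Prop) : Prop :=
  [/\ left_ideal M, ~ M 1 &
      forall J : R -> Prop, left_ideal J -> (forall a, M a -> J a) -> ~ J 1 ->
        forall a, J a -> M a].

Definition local_ring_with (M : R -> Prop) : Prop :=
  maximal_left_ideal M /\
  forall J : R -> Prop, maximal_left_ideal J -> forall a, J a <-> M a.

Definition cyc_left (y : R) : R -> Prop := fun a => exists r, a = r * y.

Definition minimal_left_ideal (J : R -> Prop) : Prop :=
  [/\ left_ideal J, (exists a, J a /\ a != 0) &
      forall K : R -> Prop, left_ideal K -> (forall a, K a -> J a) ->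
        (forall a, K a -> a = 0) \/ (forall a, J a -> K a)].

Definition internal_dsum (M : R -> Prop) (t : nat) (y : 'I_t -> R) : Prop :=
  (forall m, M m <-> exists r : 'I_t -> R, m = \sum_(i < t) r i * y i) /\
  (forall r : 'I_t -> R, \sum_(i < t) r i * y i = 0 -> forall i, r i * y i = 0).

(* membership of a pair (u,v) in the cyclic submodule R(x1,x2) of R (+) R *)
Definition in_cyc2 (x1 x2 : R) (u v : R) : Prop :=
  exists c, u = c * x1 /\ v = c * x2.

(* (R (+) R)/R(x1,x2) is a direct sum of cyclic modules: there is a family
   (g_i)_{i in I} of elements of R (+) R (representatives of elements of the
   quotient) such that the cyclic submodules R [g_i] of the quotient form an
   internal direct sum equal to the whole quotient. Finite sums are indexed by
   duplicate-free sequences of indices. *)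
Definition quot_dsum_cyclic (x1 x2 : R) : Prop :=
  exists (I : eqType) (g : I -> R * R),
    (forall u v : R, exists (s : seq I) (r : I -> R),
        in_cyc2 x1 x2 (u - \sum_(i <- s) r i * (g i).1)
                      (v - \sum_(i <- s) r i * (g i).2)) /\
    (forall (s : seq I) (r : I -> R), uniq s ->
        in_cyc2 x1 x2 (\sum_(i <- s) r i * (g i).1) (\sum_(i <- s) r i * (g i).2) ->
        forall i, i \in s -> in_cyc2 x1 x2 (r i * (g i).1) (r i * (g i).2)).

End Defs.

(* Suppose (R + R)/R(x1,x2) is the direct sum of the cyclic modules generated
   by the classes of g_i. Writing (1,0) and (0,1) in terms of the g_i and
   multiplying by x1 and x2 (which kill R(x1,x2) because M^2 = 0) expresses
   (x1,x2) as a combination sum_k C_k g_k with every C_k in x1 R + x2 R.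
   Since (x1,x2) is zero in the quotient, directness makes each C_k g_k lie
   in R(x1,x2), say C_k g_k = d (x1,x2). If the first coordinate of g_k is in M
   then C_k kills it; otherwise it is a unit, and if d is a unit too then x2
   lands in x1 R, which is impossible. Hence every C_k (g_k).1 = d x1 = 0, and
   summing gives x1 = 0. *)
From mathcomp Require Import all_boot all_algebra.
From Stdlib Require Import Classical.
Set Implicit Arguments. Unset Strict Implicit.
Import GRing.Theory.
Local Open Scope ring_scope.

Lemma lincomb_regroup (R : pzSemiRingType) (I : eqType) (s u : seq I)
    (r G : I -> R) :
  uniq u -> {subset s <= u} ->
  \sum_(i <- s) r i * G i = \sum_(k <- u) (\sum_(i <- s | i == k) r i) * G k.
Proof.
move=> uniq_u sub_su.
under [RHS]eq_bigr do rewrite mulr_suml big_mkcond.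
rewrite [RHS]exchange_big /=; apply: eq_big_seq => i s_i.
rewrite -big_mkcond -big_filter.
have -> : [seq k <- u | i == k] = [:: i].
  rewrite -(filter_pred1_uniq uniq_u (sub_su _ s_i)); apply: eq_filter => k /=.
  by rewrite eq_sym.
by rewrite big_seq1.
Qed.

Lemma lincomb2_regroup (R : pzSemiRingType) (I : eqType) (a b : R)
    (s s' : seq I) (r r' G : I -> R) :
  a * \sum_(i <- s) r i * G i + b * \sum_(i <- s') r' i * G i =
  \sum_(k <- undup (s ++ s'))
     (a * \sum_(i <- s | i == k) r i + b * \sum_(i <- s' | i == k) r' i) * G k.
Proof.
have sub_s : {subset s <= undup (s ++ s')}.
  by move=> i s_i; rewrite mem_undup mem_cat s_i.
have sub_s' : {subset s' <= undup (s ++ s')}.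
  by move=> i s'_i; rewrite mem_undup mem_cat s'_i orbT.
rewrite (lincomb_regroup _ _ (undup_uniq _) sub_s).
rewrite (lincomb_regroup _ _ (undup_uniq _) sub_s').
rewrite !mulr_sumr -big_split /=; apply: eq_bigr => k _.
by rewrite mulrDl !mulrA.
Qed.

Section SquareZeroMaximal.

Variables (R : nzRingType) (M : R -> Prop).
Hypothesis maxM : maximal_left_ideal M.
Hypothesis sqM0 : forall a b, M a -> M b -> a * b = 0.

Lemma max_mull (r a : R) : M a -> M (r * a).
Proof. by case: maxM => [[_ _ +] _ _]; apply. Qed.

Lemma notin_max_left_inv (a : R) : ~ M a -> exists b, b * a = 1.
Proof.
case: maxM => [[M0 MD MM] _ Mmax] Ma.
pose J z := exists r m, M m /\ z = r * a + m.
have idealJ : left_ideal J.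
  split.
  - by exists 0, 0; split => //; rewrite mul0r addr0.
  - move=> _ _ [r1 [m1 [Mm1 ->]]] [r2 [m2 [Mm2 ->]]].
    exists (r1 + r2), (m1 + m2); split; first exact: MD.
    by rewrite mulrDl -!addrA (addrCA m1).
  - move=> q _ [r1 [m1 [Mm1 ->]]]; exists (q * r1), (q * m1).
    by split; [exact: MM | rewrite mulrDr mulrA].
have [b [m [Mm b_a_m]]] : J 1.
  apply: NNPP => J1; apply: Ma; apply: (Mmax J idealJ _ J1).
  - by move=> m Mm; exists 0, m; rewrite mul0r add0r.
  - by exists 1, 0; rewrite mul1r addr0.
(* b a = 1 - m with m^2 = 0, and 1 + m inverts 1 - m *)
exists ((1 + m) * b); rewrite -mulrA.
have -> : b * a = 1 - m by rewrite b_a_m addrK.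
by rewrite mulrDl mul1r mulrBr mulr1 (sqM0 Mm Mm) subr0 subrK.
Qed.

Lemma notin_max_unit (a : R) : ~ M a -> exists b, b * a = 1 /\ a * b = 1.
Proof.
move=> Ma; have [b ba1] := notin_max_left_inv Ma.
have Mb : ~ M b.
  move=> Mb; have Mab : M (a * b) by exact: max_mull.
  have ab_idem : (a * b) * (a * b) = a * b by rewrite mulrA -(mulrA a b) ba1 mulr1.
  have ab0 : a * b = 0 by rewrite -ab_idem sqM0.
  have b0 : b = 0 by rewrite -[b]mul1r -ba1 -mulrA ab0 mulr0.
  by move: ba1; rewrite b0 mul0r => /eqP; rewrite eq_sym oner_eq0.
have [c cb1] := notin_max_left_inv Mb.
have a_eq_c : a = c by rewrite -[c]mulr1 -ba1 mulrA cb1 mul1r.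
by exists b; rewrite {2}a_eq_c.
Qed.

Variables x1 x2 : R.
Hypotheses (Mx1 : M x1) (Mx2 : M x2) (x2_neq0 : x2 != 0).
Hypothesis x1R_cap_x2R : forall a b : R, x1 * a = x2 * b -> x1 * a = 0.

Lemma max_mul_cyc2 (x u v : R) :
  M x -> in_cyc2 x1 x2 u v -> x * u = 0 /\ x * v = 0.
Proof. by move=> Mx [c [-> ->]]; rewrite !(sqM0 Mx (max_mull c _)). Qed.

Lemma max_mul_cyc2_congr (x u v u' v' : R) :
  M x -> in_cyc2 x1 x2 (u - u') (v - v') -> x * u' = x * u /\ x * v' = x * v.
Proof.
move=> Mx /(max_mul_cyc2 Mx); rewrite !mulrBr => -[/eqP + /eqP].
by rewrite !subr_eq0 => /eqP <- /eqP <-.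
Qed.

Lemma cyc2_summand_fst_eq0 (a b g1 g2 : R) :
  in_cyc2 x1 x2 ((x1 * a + x2 * b) * g1) ((x1 * a + x2 * b) * g2) ->
  (x1 * a + x2 * b) * g1 = 0.
Proof.
set C := x1 * a + x2 * b; move=> [d [Cg1 Cg2]].
have [Mg1 | Mg1] := classic (M g1).
  by rewrite mulrDl -!mulrA !(sqM0 _ (max_mull _ Mg1)) ?addr0.
have [g1' [_ g1g1']] := notin_max_unit Mg1.
rewrite Cg1; have [Md | Md] := classic (M d); first exact: sqM0.
have [e [ed1 _]] := notin_max_unit Md.
have C_eq : C = d * x1 * g1' by rewrite -Cg1 -mulrA g1g1' mulr1.
(* cancelling the unit d exhibits x2 as an element of x1 R *)
have x2_in_x1R : x1 * (g1' * g2) = x2 * 1.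
  by rewrite mulr1 -[x2]mul1r -ed1 -mulrA -Cg2 C_eq !mulrA ed1 mul1r.
have := x1R_cap_x2R x2_in_x1R; rewrite x2_in_x1R mulr1 => x2_eq0.
by move: x2_neq0; rewrite x2_eq0 eqxx.
Qed.

End SquareZeroMaximal.

Theorem lemma2p1 (R : nzRingType) (M : R -> Prop) (t : nat) (y : 'I_t -> R)
    (x1 x2 : R) :
  local_ring_with M ->
  (forall a b, M a -> M b -> a * b = 0) ->
  (2 <= t)%N ->
  internal_dsum M y ->
  (forall i, minimal_left_ideal (cyc_left (y i))) ->
  M x1 -> M x2 -> x1 != 0 -> x2 != 0 ->
  (forall a b : R, x1 * a = x2 * b -> x1 * a = 0) ->
  ~ quot_dsum_cyclic x1 x2.
Proof.
move=> [maxM _] sqM0 _ _ _ Mx1 Mx2 x1_neq0 x2_neq0 x1R_cap_x2R [I [g [gen dsum]]].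
have [s [r gen10]] := gen 1 0; have [s' [r' gen01]] := gen 0 1.
have [x1_10 x1_10'] := max_mul_cyc2_congr maxM sqM0 Mx1 Mx2 Mx1 gen10.
have [x2_01 x2_01'] := max_mul_cyc2_congr maxM sqM0 Mx1 Mx2 Mx2 gen01.
pose C k := x1 * \sum_(i <- s | i == k) r i + x2 * \sum_(i <- s' | i == k) r' i.
have sum_fst : \sum_(k <- undup (s ++ s')) C k * (g k).1 = x1.
  by rewrite -lincomb2_regroup x1_10 x2_01 mulr1 mulr0 addr0.
have sum_snd : \sum_(k <- undup (s ++ s')) C k * (g k).2 = x2.
  by rewrite -lincomb2_regroup x1_10' x2_01' mulr1 mulr0 add0r.
have x1x2_in_cyc2 : in_cyc2 x1 x2 (\sum_(k <- undup (s ++ s')) C k * (g k).1)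
                                  (\sum_(k <- undup (s ++ s')) C k * (g k).2).
  by exists 1; rewrite sum_fst sum_snd !mul1r.
have summands := dsum _ C (undup_uniq _) x1x2_in_cyc2.
move: x1_neq0; rewrite -sum_fst big_seq big1 ?eqxx // => k /summands.
exact: (cyc2_summand_fst_eq0 maxM sqM0 Mx1 Mx2 x2_neq0 x1R_cap_x2R).
Qed.
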